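(* Let $\mu$ be a positive Borel measure on $\mathbb{R}$, absolutely continuous w.r.t. Lebesgue measure, with finite moments, supported on a set $E$ with infinitely many points, $c\in\mathbb{R}\setminus E$, $N>0$, and assume the monic orthogonal polynomials $P_n$ of $\mu$ satisfy $xP_n=P_{n+1}+\beta_nP_n+\gamma_nP_{n-1}$ and $\sigma(x)P_n'(x)=a(x;n)P_n(x)+b(x;n)P_{n-1}(x)$ with polynomials $\sigma,a(\cdot;n),b(\cdot;n)$. Then $$Q_{n-1}^{c,N}(x)=A_2(n)P_n(x)+B_2(x;n)P_{n-1}(x),\qquad [Q_{n-1}^{c,N}]'(x)=C_2(x;n)P_n(x)+D_2(x;n)P_{n-1}(x),$$ where $$A_2(n)=\frac{-\Lambda_{n-1}^c}{\gamma_{n-1}},\qquad B_2(x;n)=\Lambda_{n-1}^c\Big(\frac{1}{\Lambda_{n-1}^c}+\frac{x-\beta_{n-1}}{\gamma_{n-1}}\Big),$$ $$C_2(x;n)=-\frac{\Lambda_{n-1}^c}{\sigma(x)}\Big(\frac{a(x;n)}{\gamma_{n-1}}+\frac{b(x;n-1)}{\gamma_{n-1}}\Big(\frac{1}{\Lambda_{n-1}^c}+\frac{x-\beta_{n-1}}{\gamma_{n-1}}\Big)\Big),$$ $$D_2(x;n)=\frac{\Lambda_{n-1}^c}{\sigma(x)}\Big[\frac{\sigma(x)-b(x;n)}{\gamma_{n-1}}+b(x;n-1)\Big(\frac{a(x;n-1)}{b(x;n-1)}+\frac{x-\beta_{n-1}}{\gamma_{n-1}}\Big)\Big(\frac{1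}{\Lambda_{n-1}^c}+\frac{x-\beta_{n-1}}{\gamma_{n-1}}\Big)\Big].$$
   Context: $\{Q_n^c\}$ is the MOPS for $\int fg\frac{1}{x-c}d\mu$; $\{Q_n^{c,N}\}$ is the MOPS for $\int fg\frac{1}{x-c}d\mu+Nf(c)g(c)$. $\Lambda_m^c$ is the constant with $Q_m^{c,N}=P_m+\Lambda_m^cP_{m-1}$, namely $\Lambda_m^c=\frac{\pi_{m-1}-r_{m-1}}{1+NB_m^c}-\pi_{m-1}$ with $\pi_{m-1}=P_m(c)/P_{m-1}(c)$, $r_{m-1}=F_m(c)/F_{m-1}(c)$, $F_m(s)=\int\frac{P_m(x)}{x-s}d\mu(x)$, $F_{-1}=1$, $B_m^c=\frac{-Q_m^c(c)P_{m-1}(c)}{\int P_{m-1}^2d\mu}$. *)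

From HB Require Import structures.
From mathcomp Require Import all_boot all_order all_algebra.
From mathcomp Require Import all_classical all_reals all_analysis.
Set Implicit Arguments. Unset Strict Implicit. Unset Printing Implicit Defensive.
Import Order.TTheory GRing.Theory Num.Theory.
Import numFieldNormedType.Exports.
Local Open Scope classical_set_scope.
Local Open Scope ring_scope.

Definition msupport (R : realType)
  (mu : {measure set (measurableTypeR R) -> \bar R}) : set R :=
  [set x | forall e : R, 0 < e -> (0 < mu (ball x e))%E].

Definition Lmu (R : realType) (mu : {measure set (measurableTypeR R) -> \bar R})
  (f g : {poly R}) : R :=
  fine (\int[mu]_x ((f.[x] * g.[x])%:E)).

Definition LcN (R : realType) (mu : {measure set (measurableTypeR R) -> \bar R})
  (c N : R) (f g : {poly R}) : R :=
  fine (\int[mu]_x ((f.[x] * g.[x] / (x - c))%:E)) + N * f.[c] * g.[c].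

Definition is_MOPS (R : realType) (L : {poly R} -> {poly R} -> R)
  (P : nat -> {poly R}) : Prop :=
  forall n : nat,
    [/\ P n \is monic, size (P n) = n.+1,
        (forall m : nat, m <> n -> L (P n) (P m) = 0) & L (P n) (P n) <> 0].

Definition Pprev (R : ringType) (P : nat -> {poly R}) (n : nat) : {poly R} :=
  if n is k.+1 then P k else 0.

(* Lambda_m^c : the constant with Q_m^{c,N} = P_m + Lambda_m^c P_{m-1}.
   As P_{m-1} is monic of degree m-1, this constant is the coefficient of
   X^{m-1} in Q_m^{c,N} - P_m. *)
Definition Lambda (R : ringType) (Q P : nat -> {poly R}) (m : nat) : R :=
  (Q m - P m)`_(m.-1).

From HB Require Import structures.
From mathcomp Require Import all_boot all_order all_algebra.
From mathcomp Require Import all_classical all_reals all_analysis.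
From mathcomp Require Import measurable_realfun ring zify.
Import Order.TTheory GRing.Theory Num.Theory.
Import numFieldNormedType.Exports.
Set Implicit Arguments. Unset Strict Implicit. Unset Printing Implicit Defensive.
Local Open Scope classical_set_scope.
Local Open Scope ring_scope.

(* As c lies outside the support, mu gives no mass to a ball around c, so
   1/(x - c) may be replaced by a bounded function: both forms are then of the
   shape (f, g) |-> F (f g) with F linear.  Since
   <Q_{n-1}, P_i>_mu = <Q_{n-1}, (x - c) P_i>_{c,N} = 0 for i < n - 2,
   Q_{n-1} - P_{n-1} has degree n - 2 and is orthogonal to every P_i, i < n - 2,
   so Q_{n-1} = P_{n-1} + Lambda P_{n-2}.  Eliminating P_{n-2} with the
   three-term recurrence (gamma_{n-1} <> 0 because
   gamma_{n-1} <P_{n-2}, P_{n-2}> = <P_{n-1}, P_{n-1}>) gives the first formula;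
   differentiating and using the structure relation gives the second. *)

Definition prod_form (R : nzRingType) (F : {poly R} -> R) (p q : {poly R}) : R :=
  F (p * q).

Lemma size_sub_monic (R : nzRingType) (p q : {poly R}) k :
  p \is monic -> q \is monic -> size p = k.+1 -> size q = k.+1 ->
  (size (p - q)%R <= k)%N.
Proof.
move=> /monicP mp /monicP mq sp sq; apply/leq_sizeP => j kj.
rewrite coefB; case: (ltngtP k j) kj => // [kj|<-] _.
  by rewrite !nth_default ?sp ?sq ?subr0.
by move: mp mq; rewrite !lead_coefE sp sq /= => -> ->; rewrite subrr.
Qed.

Section MonicOrthogonalPolynomials.
Variables (R : realType) (F : {poly R} -> R).
Hypothesis FD : forall p q, F (p + q) = F p + F q.
Hypothesis FZ : forall a p, F (a *: p) = a * F p.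
Variable P : nat -> {poly R}.
Hypothesis HP : is_MOPS (prod_form F) P.

Local Notation B := (prod_form F).

Lemma prod_formC p q : B p q = B q p.
Proof. by rewrite /prod_form mulrC. Qed.

Lemma prod_formDl p q r : B (p + q) r = B p r + B q r.
Proof. by rewrite /prod_form mulrDl FD. Qed.

Lemma prod_formZl a p r : B (a *: p) r = a * B p r.
Proof. by rewrite /prod_form -scalerAl FZ. Qed.

Lemma prod_formNl p r : B (- p) r = - B p r.
Proof. by rewrite -scaleN1r prod_formZl mulN1r. Qed.

Lemma prod_form0l r : B 0 r = 0.
Proof. by rewrite -(scale0r 0) prod_formZl mul0r. Qed.

Lemma prod_formXl p q : B ('X * p) q = B p ('X * q).
Proof. by rewrite /prod_form -mulrA mulrCA. Qed.

Lemma mops_coef k : (P k)`_k = 1.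
Proof. by have [/monicP + s _ _] := HP k; rewrite lead_coefE s. Qed.

Lemma mops_orth i j : i <> j -> B (P i) (P j) = 0.
Proof. by move=> ij; have [_ _ o _] := HP i; apply: o => ji; apply: ij. Qed.

Lemma size_sub_mops k (p : {poly R}) :
  (size p <= k.+1)%N -> (size (p - p`_k *: P k)%R <= k)%N.
Proof.
move=> sp; apply/leq_sizeP => j kj; have [_ s _ _] := HP k.
rewrite coefB coefZ; case: (ltngtP k j) kj => // [kj|<-] _; last first.
  by rewrite mops_coef mulr1 subrr.
rewrite (nth_default 0 (leq_trans sp kj)) (nth_default 0 (_ : size (P k) <= j)%N) ?s //.
by rewrite mulr0 subr0.
Qed.

Lemma mops_orth_size_lt k (p : {poly R}) i :
  (size p <= k)%N -> (k <= i)%N -> B p (P i) = 0.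
Proof.
elim: k p => [|k IH] p sp ki.
  by move/size_poly_leq0P: sp => ->; rewrite prod_form0l.
rewrite -{1}(subrK (p`_k *: P k) p) prod_formDl prod_formZl.
rewrite IH ?size_sub_mops ?(ltnW ki) //.
by rewrite mops_orth ?mulr0 ?addr0 // => ik; rewrite ik ltnn in ki.
Qed.

Lemma mops_orth_eq0 k (r : {poly R}) : (size r <= k)%N ->
  (forall i, (i < k)%N -> B r (P i) = 0) -> r = 0.
Proof.
elim: k r => [|k IH] r sr rP; first exact/size_poly_leq0P.
have rk : r`_k = 0.
  have [_ _ _ /eqP nz] := HP k.
  have := rP k (ltnSn k).
  rewrite -{1}(subrK (r`_k *: P k) r) prod_formDl prod_formZl.
  rewrite (mops_orth_size_lt (size_sub_mops sr) (leqnn k)) add0r => /eqP.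
  by rewrite mulf_eq0 (negbTE nz) orbF => /eqP.
apply: IH => [|i ik]; last exact: rP (ltnW ik).
by move: (size_sub_mops sr); rewrite rk scale0r subr0.
Qed.

Lemma mops_two_term (q : {poly R}) k : q \is monic -> size q = k.+2 ->
  (forall i, (i < k)%N -> B q (P i) = 0) ->
  q = P k.+1 + (q - P k.+1)`_k *: P k.
Proof.
move=> mq sq qP; have [mP sP _ _] := HP k.+1.
apply/eqP; rewrite -subr_eq0 opprD addrA; apply/eqP.
apply: (mops_orth_eq0 (size_sub_mops (size_sub_monic mq mP sq sP))) => i ik.
rewrite !prod_formDl !prod_formNl prod_formZl qP // !mops_orth; try lia.
by rewrite mulr0 !subr0.
Qed.

Lemma size_mops_prev k : (size (Pprev P k) <= k)%N.
Proof. by case: k => [|k] /=; [rewrite size_poly0 | have [_ -> _ _] := HP k]. Qed.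

Section ThreeTermRecurrence.
Variables beta gamma : nat -> R.
Hypothesis rec :
  forall k, 'X * P k = P k.+1 + beta k *: P k + gamma k *: Pprev P k.

Lemma mops_norm_rec k : B (P k.+1) (P k.+1) = gamma k.+1 * B (P k) (P k).
Proof.
have XPk : B ('X * P k) (P k.+1) = B (P k.+1) (P k.+1).
  rewrite rec !prod_formDl !prod_formZl.
  rewrite (mops_orth_size_lt (size_mops_prev k) (leqnSn k)) (@mops_orth k k.+1) //.
  by rewrite !mulr0 !addr0.
rewrite -XPk prod_formXl prod_formC rec !prod_formDl !prod_formZl /=.
by rewrite (@mops_orth k.+2 k) ?(@mops_orth k.+1 k) ?mulr0 ?add0r //; lia.
Qed.

Lemma mops_rec_coef_neq0 k : gamma k.+1 != 0.
Proof.
have [_ _ _ nz] := HP k.+1.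
by apply: contra_notN nz => /eqP g0; rewrite mops_norm_rec g0 mul0r.
Qed.

End ThreeTermRecurrence.

End MonicOrthogonalPolynomials.

Section TwoTermCombination.
Variables (R : fieldType) (P : nat -> {poly R}) (beta gamma : nat -> R).
Variables (sigma : {poly R}) (a b : nat -> {poly R}).
Hypothesis rec :
  forall k, 'X * P k = P k.+1 + beta k *: P k + gamma k *: Pprev P k.
Hypothesis str :
  forall k, (1 <= k)%N -> sigma * (P k)^`() = a k * P k + b k * Pprev P k.
Variables (k : nat) (L : R) (q : {poly R}).
Hypothesis qE : q = P k.+1 + L *: P k.
Hypothesis g_neq0 : gamma k.+1 != 0.
Hypothesis L_neq0 : L != 0.

Local Notation g := (gamma k.+1).
Local Notation bt := (beta k.+1).

Lemma prev_rec : g *: P k = ('X - bt%:P) * P k.+1 - P k.+2.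
Proof. by rewrite mulrBl rec /= -!mul_polyC; ring. Qed.

Lemma horner_prev_rec x :
  (P k).[x] = ((x - bt) * (P k.+1).[x] - (P k.+2).[x]) / g.
Proof.
have := congr1 (horner^~ x) prev_rec; rewrite /= hornerZ !hornerE => <-.
by rewrite mulrC mulKf.
Qed.

Lemma deriv_prev_rec x :
  (P k)^`().[x] = ((P k.+1).[x] + (x - bt) * (P k.+1)^`().[x] - (P k.+2)^`().[x]) / g.
Proof.
have := congr1 (fun p => p^`().[x]) prev_rec.
rewrite /= derivZ derivB derivM derivXsubC mul1r hornerZ !hornerE => <-.
by rewrite mulrC mulKf.
Qed.

Lemma horner_two_term x :
  q.[x] = - L / g * (P k.+2).[x] + L * (L^-1 + (x - bt) / g) * (P k.+1).[x].
Proof.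
by rewrite qE hornerD hornerZ horner_prev_rec; field; rewrite L_neq0 g_neq0.
Qed.

Lemma deriv_two_term x : sigma.[x] != 0 -> (b k.+1).[x] != 0 ->
  q^`().[x] =
    - (L / sigma.[x]) * ((a k.+2).[x] / g + (b k.+1).[x] / g * (L^-1 + (x - bt) / g))
      * (P k.+2).[x]
  + L / sigma.[x] * ((sigma.[x] - (b k.+2).[x]) / g
      + (b k.+1).[x] * ((a k.+1).[x] / (b k.+1).[x] + (x - bt) / g)
        * (L^-1 + (x - bt) / g)) * (P k.+1).[x].
Proof.
move=> s_neq0 b_neq0.
have str_x j : (1 <= j)%N ->
    (P j)^`().[x] = ((a j).[x] * (P j).[x] + (b j).[x] * (Pprev P j).[x]) / sigma.[x].
  by move=> j1; rewrite -!hornerM -hornerD -str // hornerM mulrC mulKf.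
rewrite qE derivD derivZ hornerD hornerZ deriv_prev_rec !str_x //= horner_prev_rec.
by field; rewrite s_neq0 b_neq0 g_neq0 L_neq0.
Qed.

End TwoTermCombination.

Lemma measurable_horner (R : realType) (p : {poly R}) :
  measurable_fun setT (horner p).
Proof. by apply: continuous_measurable_fun; exact: continuous_horner. Qed.

Lemma measurable_inv (R : realType) : measurable_fun setT (@GRing.inv R).
Proof.
have -> : [set: R] = [set x : R | x != 0] `|` [set 0].
  by apply/seteqP; split => x // _; case: (eqVneq x 0); [right | left].
apply/measurable_funU.
- by apply: open_measurable; exact: open_neq.
- exact: measurable_set1.
split; last exact: measurable_fun_set1.
apply: open_continuous_measurable_fun; first exact: open_neq.
by move=> x /set_mem x_neq0; apply: inv_continuous.
Qed.

Lemma measurable_inv_subr (R : realType) (c : R) :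
  measurable_fun setT (fun x : R => (x - c)^-1).
Proof.
apply: measurableT_comp; first exact: measurable_inv.
by apply: measurable_funB => //; exact: measurable_cst.
Qed.

Definition poly_wintegral (R : realType)
    (mu : {measure set (measurableTypeR R) -> \bar R}) (w : R -> R) (p : {poly R}) :=
  \int[mu]_x (p.[x] * w x).

Section PolynomialIntegrals.
Context (R : realType) (mu : {measure set (measurableTypeR R) -> \bar R}).
Hypothesis moments : forall k, mu.-integrable setT (fun x : R => (x ^+ k)%:E).

Lemma integrable_horner (p : {poly R}) : mu.-integrable setT (EFin \o horner p).
Proof.
have : mu.-integrable setT (fun x => \sum_(i < size p) ((p`_i)%:E * (x ^+ i)%:E)%E).
  by apply: integrable_sum => // i _; exact: integrableZl.
apply: eq_integrable => // x _.
by rewrite /= horner_coef -sumEFin; apply: eq_bigr => i _; rewrite EFinM.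
Qed.

Variables (w : R -> R) (M : R).
Hypothesis measurable_w : measurable_fun setT w.
Hypothesis w_bounded : forall x, `|w x| <= M.

Lemma integrable_horner_weight (p : {poly R}) :
  mu.-integrable setT (EFin \o (fun x => p.[x] * w x)).
Proof.
apply: (le_integrable _ _ _ (integrable_horner (M *: p))) => //.
  by apply/measurable_EFinP/measurable_funM => //; exact: measurable_horner.
move=> x _ /=; rewrite lee_fin hornerZ !normrM mulrC.
by rewrite ler_wpM2r // (le_trans (w_bounded x)) // ler_norm.
Qed.

Lemma poly_wintegralD p q :
  poly_wintegral mu w (p + q) = poly_wintegral mu w p + poly_wintegral mu w q.
Proof.
rewrite /poly_wintegral -RintegralD ?integrable_horner_weight //.
by apply: eq_Rintegral => x _; rewrite hornerD mulrDl.
Qed.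

Lemma poly_wintegralZ a p : poly_wintegral mu w (a *: p) = a * poly_wintegral mu w p.
Proof.
rewrite /poly_wintegral -RintegralZl ?integrable_horner_weight //.
by apply: eq_Rintegral => x _; rewrite hornerZ mulrA.
Qed.

End PolynomialIntegrals.

Lemma Lmu_prod_form (R : realType) (mu : {measure set (measurableTypeR R) -> \bar R}) :
  Lmu mu = prod_form (poly_wintegral mu (fun=> 1)).
Proof.
apply/funext => f; apply/funext => g; rewrite /Lmu /prod_form /poly_wintegral /Rintegral.
by congr fine; apply: eq_integral => x _; rewrite hornerM mulr1.
Qed.

Lemma msupportN_ball0 (R : realType)
    (mu : {measure set (measurableTypeR R) -> \bar R}) (c : R) :
  ~ msupport mu c -> exists2 e : R, 0 < e & mu (ball c e) = 0%E.
Proof.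
move=> c_notin; apply: contrapT => no_ball; apply: c_notin => e e_gt0.
rewrite lt0e measure_ge0 andbT; apply/negP => /eqP mu0; apply: no_ball.
by exists e.
Qed.

(* A bounded stand-in for 1/(x - c), exact off the ball that mu does not charge. *)
Definition cutoff_inv (R : realType) (c e x : R) : R :=
  (x - c)^-1 * \1_(~` ball c e) x.

Definition LcN_functional (R : realType)
    (mu : {measure set (measurableTypeR R) -> \bar R}) (c e N : R) (p : {poly R}) :=
  poly_wintegral mu (cutoff_inv c e) p + N * p.[c].

Section CutoffInverse.
Variables (R : realType) (c e : R).
Hypothesis e_gt0 : 0 < e.

Lemma measurable_cutoff_inv : measurable_fun setT (cutoff_inv c e).
Proof.
apply: measurable_funM; first exact: measurable_inv_subr.
by apply: measurable_indic; apply: measurableC; exact: measurable_ball.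
Qed.

Lemma cutoff_invE x : ~ ball c e x -> cutoff_inv c e x = (x - c)^-1.
Proof. by move=> x_out; rewrite /cutoff_inv indicE mem_set // mulr1. Qed.

Lemma cutoff_inv_bound x : `|cutoff_inv c e x| <= e^-1.
Proof.
have [x_in|x_out] := pselect (ball c e x).
  by rewrite /cutoff_inv indicE memNset ?mulr0 ?normr0 ?invr_ge0 ?ltW // => /(_ x_in).
have e_le : e <= `|x - c|.
  by rewrite leNgt; apply/negP => lt; apply: x_out; rewrite -ball_normE /= distrC.
by rewrite cutoff_invE // normfV lef_pV2 ?posrE // (lt_le_trans e_gt0).
Qed.

Section LcNFunctional.
Variable mu : {measure set (measurableTypeR R) -> \bar R}.
Hypothesis moments : forall k, mu.-integrable setT (fun x : R => (x ^+ k)%:E).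
Variable N : R.

Lemma LcN_functionalD p q :
  LcN_functional mu c e N (p + q) =
  LcN_functional mu c e N p + LcN_functional mu c e N q.
Proof.
rewrite /LcN_functional.
rewrite (poly_wintegralD moments measurable_cutoff_inv cutoff_inv_bound) hornerD.
by ring.
Qed.

Lemma LcN_functionalZ a p :
  LcN_functional mu c e N (a *: p) = a * LcN_functional mu c e N p.
Proof.
rewrite /LcN_functional.
rewrite (poly_wintegralZ moments measurable_cutoff_inv cutoff_inv_bound) hornerZ.
by ring.
Qed.

End LcNFunctional.

Section NullBall.
Variable mu : {measure set (measurableTypeR R) -> \bar R}.
Hypothesis mu_ball0 : mu (ball c e) = 0%E.

Lemma integral_eq_outside_ball (f g : R -> R) :
  measurable_fun setT f -> measurable_fun setT g ->
  (forall x, ~ ball c e x -> f x = g x) ->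
  (\int[mu]_x (f x)%:E = \int[mu]_x (g x)%:E)%E.
Proof.
move=> mf mg fg; apply: ae_eq_integral => //; [exact/measurable_EFinP.. |].
exists (ball c e); split => //; first exact: measurable_ball.
by move=> x /= fgN; apply: contrapT => x_out; apply: fgN => _; rewrite fg.
Qed.

Lemma measurable_horner_div (f g : {poly R}) :
  measurable_fun setT (fun x => f.[x] * g.[x] / (x - c)).
Proof.
apply: measurable_funM; last exact: measurable_inv_subr.
by apply: measurable_funM; exact: measurable_horner.
Qed.

Lemma LcN_prod_form N : LcN mu c N = prod_form (LcN_functional mu c e N).
Proof.
apply/funext => f; apply/funext => g.
rewrite /LcN /prod_form /LcN_functional /poly_wintegral /Rintegral hornerM mulrA.
congr (fine _ + _); apply: integral_eq_outside_ball => [| |x x_out].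
- exact: measurable_horner_div.
- by apply: measurable_funM; [exact: measurable_horner | exact: measurable_cutoff_inv].
- by rewrite cutoff_invE // hornerM.
Qed.

Lemma Lmu_LcN_mulXsubC N f g : Lmu mu f g = LcN mu c N f (('X - c%:P) * g).
Proof.
rewrite /LcN /Lmu hornerM hornerXsubC subrr mul0r mulr0 addr0; congr fine.
apply: integral_eq_outside_ball => [| |x x_out].
- by apply: measurable_funM; exact: measurable_horner.
- exact: measurable_horner_div.
have x_neq_c : x - c != 0.
  by rewrite subr_eq0; apply: contra_notN x_out => /eqP ->; exact: ballxx.
by rewrite hornerM hornerXsubC; field.
Qed.

End NullBall.
End CutoffInverse.

Theorem lemma4 (R : realType)
  (mu : {measure set (measurableTypeR R) -> \bar R})
  (c N : R) (P Q : nat -> {poly R}) (beta gamma : nat -> R)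
  (sigma : {poly R}) (a b : nat -> {poly R}) (n : nat) :
  (* mu absolutely continuous w.r.t. Lebesgue measure *)
  mu `<< lebesgue_measure ->
  (* finite moments *)
  (forall k : nat, mu.-integrable setT (fun x : R => (x ^+ k)%:E)) ->
  (* the support E of mu has infinitely many points, and c is not in E *)
  infinite_set (msupport mu) ->
  ~ msupport mu c ->
  0 < N ->
  (* P is the MOPS of mu *)
  is_MOPS (Lmu mu) P ->
  (* three-term recurrence  x P_k = P_{k+1} + beta_k P_k + gamma_k P_{k-1} *)
  (forall k : nat, 'X * P k = P k.+1 + beta k *: P k + gamma k *: Pprev P k) ->
  (* structure relation  sigma P_k' = a(.;k) P_k + b(.;k) P_{k-1} *)
  (forall k : nat, (1 <= k)%N ->
     sigma * (P k)^`() = a k * P k + b k * Pprev P k) ->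
  (* Q is the MOPS of  \int f g /(x-c) dmu + N f(c) g(c) *)
  is_MOPS (LcN mu c N) Q ->
  (2 <= n)%N ->
  Lambda Q P n.-1 != 0 ->
  let L := Lambda Q P n.-1 in
  let g := gamma n.-1 in
  let bt := beta n.-1 in
  (forall x : R,
     (Q n.-1).[x] = (- L / g) * (P n).[x]
                    + L * (L^-1 + (x - bt) / g) * (P n.-1).[x])
  /\
  (forall x : R, sigma.[x] != 0 -> (b n.-1).[x] != 0 ->
     ((Q n.-1)^`()).[x] =
       (- (L / sigma.[x]) * ((a n).[x] / g
            + (b n.-1).[x] / g * (L^-1 + (x - bt) / g))) * (P n).[x]
     + (L / sigma.[x] * ((sigma.[x] - (b n).[x]) / g
            + (b n.-1).[x] * ((a n.-1).[x] / (b n.-1).[x] + (x - bt) / g)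
              * (L^-1 + (x - bt) / g))) * (P n.-1).[x]).
Proof.
move=> _ moments _ c_notin _ HP rec str HQ; case: n => [|[|k]] // _ /= L_neq0.
have [e e_gt0 mu_ball0] := msupportN_ball0 c_notin.
have one_bounded (x : R) : `|(fun=> 1 : R) x| <= 1 by rewrite normr1.
have FD := poly_wintegralD moments (measurable_cst (1 : R)) one_bounded.
have FZ := poly_wintegralZ moments (measurable_cst (1 : R)) one_bounded.
rewrite Lmu_prod_form in HP.
rewrite (LcN_prod_form mu_ball0) in HQ.
have Q_orth_P i : (i < k)%N -> prod_form (poly_wintegral mu (fun=> 1)) (Q k.+1) (P i) = 0.
  move=> ik; rewrite -Lmu_prod_form (Lmu_LcN_mulXsubC e_gt0 mu_ball0 N).
  rewrite (LcN_prod_form mu_ball0) prod_formC.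
  apply: (mops_orth_size_lt (LcN_functionalD c e_gt0 moments N)
    (LcN_functionalZ c e_gt0 moments N) HQ _ (leqnn k.+1)).
  have [monP sizeP _ _] := HP i.
  by rewrite size_Mmonic ?polyXsubC_eq0 // size_XsubC sizeP; lia.
have g_neq0 := mops_rec_coef_neq0 FD FZ HP rec k.
have [monQ sizeQ _ _] := HQ k.+1.
have Q_two_term := mops_two_term FD FZ HP monQ sizeQ Q_orth_P.
by split => x; [exact: horner_two_term | exact: deriv_two_term].
Qed.
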